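(* Let $k$ be a field, $p \in k[t]$ a monic irreducible separable polynomial of degree $d$, $\alpha$ a root of $p$ in an algebraic closure of $k$, and $K = k(\alpha)$. Let $\lambda$ be a partition of $n$. Then the centralizer of $J_\lambda(C_p)$ in $M_{nd}(k)$ is isomorphic as a $k$-algebra to $K[x]_\lambda$.
   Context: $C_p$ is the $d\times d$ companion matrix of $p$, i.e. the matrix of multiplication by $\alpha$ on $K$ with respect to the $k$-basis $1,\alpha,\dots,\alpha^{d-1}$. For a $d\times d$ matrix $A$, $J_m(A)$ is the $md\times md$ block matrix with $A$ in each diagonal block, $I_d$ in each block directly below the diagonal, and $0$ elsewhere; $J_\lambda(A) = \bigoplus_i J_{\lambda_i}(A)$. For a field $K$ and partition $\lambda=(\lambda_1\ge\dots\ge\lambda_s)$, $K[x]_\lambda$ is the quotient $\mathcal{A}/\mathcal{I}$, where $\mathcal{A}$ is the algebra of $s\times s$ matrices over $K[x]$ whose $(i,j)$ entry lies in $x^{\max(0,\lambda_i-\lambda_j)}K[x]$, and $\mathcal{I}$ is the two-sided ideal of matrices whose entries in row $i$ all lie in $x^{\lambda_i}K[x]$. *)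

From HB Require Import structures.
From mathcomp Require Import all_boot all_order all_algebra all_field.
Set Implicit Arguments. Unset Strict Implicit. Unset Printing Implicit Defensive.
Import GRing.Theory.
Local Open Scope ring_scope.

(* Companion matrix C_p in the column convention of the paper: the matrix of
   multiplication by alpha on K = k[t]/(p) in the basis 1, alpha, ...,
   alpha^(d-1), acting on column vectors.  MathComp's [companionmx] uses the
   row-vector convention, so C_p is its transpose. *)
Definition compmx {k : fieldType} (p : {poly k}) : 'M[k]_((size p).-1) :=
  (companionmx p)^T.

Definition jordan_blk {R : nzRingType} {d : nat} (m : nat) (A : 'M[R]_d)
  : 'M[R]_(\sum_(i < m) d) :=
  @mxblock R m m (fun _ => d) (fun _ => d)
    (fun i j => if i == j then A
                else if (i : nat) == j.+1 then 1%:M else 0).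

Definition jsize (lam : seq nat) (d : nat) : nat :=
  \sum_(i < size lam) \sum_(j < nth 0 lam i) d.

Definition jordan {R : nzRingType} {d : nat} (lam : seq nat) (A : 'M[R]_d)
  : 'M[R]_(jsize lam d) :=
  @mxdiag R (size lam) (fun i => \sum_(j < nth 0 lam i) d)
    (fun i => jordan_blk (nth 0 lam i) A).

Definition is_partition (n : nat) (lam : seq nat) : Prop :=
  [/\ sorted geq lam, all (fun x => 0 < x)%N lam & sumn lam = n].

(* The algebra A of K[x]_lambda: s x s matrices over K[x] whose (i,j) entry
   lies in x^(max(0, lambda_i - lambda_j)) K[x]. *)
Definition in_Kxl_alg {K : fieldType} (lam : seq nat)
  (M : 'M[{poly K}]_(size lam)) : Prop :=
  forall i j : 'I_(size lam), 'X^(nth 0 lam i - nth 0 lam j) %| M i j.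

Definition in_Kxl_ideal {K : fieldType} (lam : seq nat)
  (M : 'M[{poly K}]_(size lam)) : Prop :=
  forall i j : 'I_(size lam), 'X^(nth 0 lam i) %| M i j.

Arguments in_Kxl_alg {K} lam M.
Arguments in_Kxl_ideal {K} lam M.

Definition in_centralizer {k : fieldType} {N : nat} (J B : 'M[k]_N) : Prop :=
  B *m J = J *m B.

(* Since the quotient A/I is not built
   as a type, the k-algebra isomorphism A/I ~ C(J) is expressed by a map f
   defined on A which is a unital k-algebra homomorphism A -> C(J), onto
   C(J), with kernel exactly I (equivalently, f induces a k-algebra
   isomorphism A/I -> C(J)). *)
Definition centralizer_iso_Kxl {k : fieldType} {K : fieldExtType k}
  (lam : seq nat) {N : nat} (J : 'M[k]_N) : Prop :=
  exists f : 'M[{poly K}]_(size lam) -> 'M[k]_N,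
    [/\ forall M, in_Kxl_alg lam M -> in_centralizer J (f M),
        f 1%:M = 1%:M,
      ( forall M M', in_Kxl_alg lam M -> in_Kxl_alg lam M' ->
          f (M + M') = f M + f M') /\
      ( forall M M', in_Kxl_alg lam M -> in_Kxl_alg lam M' ->
          f (M *m M')  = f M *m f M') /\
      ( forall (c : k) M, in_Kxl_alg lam M ->
          f ((in_alg K c)%:P *: M) = c *: f M),
        forall B, in_centralizer J B -> exists2 M, in_Kxl_alg lam M & f M = B
      & forall M, in_Kxl_alg lam M -> (f M = 0 <-> in_Kxl_ideal lam M)].

From HB Require Import structures.
From mathcomp Require Import all_boot all_order all_algebra all_field.
From mathcomp Require Import zify ring.
Set Implicit Arguments. Unset Strict Implicit. Unset Printing Implicit Defensive.
Import GRing.Theory.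
Local Open Scope ring_scope.

(* With the power basis [1, alpha, ..., alpha^(d-1)], the space [k^d] becomes
   [K] and [C_p] becomes multiplication by [alpha]; a k-matrix commuting with all
   multiplications by elements of [K] is itself such a multiplication.  In the
   basis [alpha^b x^a] of [K[x]/(x^m)], [J_m(C_p)] is multiplication by [x + alpha],
   and a polynomial [P] divisible by [x^(m1 - m2)] acts
   [K[x]/(x^m2) -> K[x]/(x^m1)] by a block Toeplitz matrix.  Applying this entrywise
   maps the algebra of [K[x]_lambda] to the centralizer of [J = J_lambda(C_p)],
   multiplicatively, with kernel exactly the ideal.
   Onto: [alpha] is a simple root of [p], so Newton iteration gives [q] in [k[t]]
   with [q(x + alpha) = alpha mod x^n]; hence [q(J)] is the image of [alpha], and a
   matrix commuting with [J] commutes with the images of [K = k[alpha]] and of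
   [x = (x + alpha) - alpha].  The first forces each block to consist of
   multiplications by elements of [K], the second forces the Toeplitz pattern,
   i.e. each block is the image of a polynomial. *)

Lemma dvdp_XnP (R : fieldType) (m : nat) (P : {poly R}) :
  reflect (forall t, (t < m)%N -> P`_t = 0) ('X^m %| P).
Proof.
apply: (iffP idP) => [/dvdpP [q ->] t tm | P0]; first by rewrite coefMXn tm.
rewrite -(poly_take_drop m P) [take_poly m P](_ : _ = 0) ?add0r ?dvdp_mulIr //.
by apply/polyP => i; rewrite coef_take_poly coef0; case: ltnP => // /P0.
Qed.

Lemma coefM_window (R : nzSemiRingType) (P Q : {poly R}) (m1 m2 a g : nat) :
  (forall t, (t < m1 - m2)%N -> P`_t = 0) -> (a < m1)%N -> (g <= a)%N ->
  \sum_(c < m2 | (g <= c <= a)%N) P`_(a - c) * Q`_(c - g) = (P * Q)`_(a - g).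
Proof.
move=> P0 am ga; pose F c := P`_(a - c) * Q`_(c - g).
have -> : \sum_(c < m2 | (g <= c <= a)%N) F c =
           \sum_(c < a.+1 + m2 | (g <= c <= a)%N) F c.
  rewrite (big_ord_widen_cond _ (fun c => g <= c <= a)%N F (leq_addl a.+1 m2)).
  rewrite big_mkcond [RHS]big_mkcond.
  apply: eq_bigr => c _; case: (ltnP c m2) => cm2; rewrite ?andbT ?andbF //.
  by case: ifP => // /andP [_ ca]; rewrite /F P0 ?mul0r //; lia.
rewrite (eq_bigl (fun c : 'I_(a.+1 + m2) => (g <= c) && (c < a.+1))%N); last first.
  by move=> c; rewrite ltnS.
rewrite -(big_ord_widen_cond _ (fun c => g <= c)%N F (leq_addr m2 a.+1)) /=.
rewrite -(big_geq_mkord g a.+1 predT F) -{1}(add0n g) big_addn big_mkord coefMr.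
have -> : (a.+1 - g = (a - g).+1)%N by lia.
by apply: eq_bigr => j _; rewrite /F; congr (P`_ _ * Q`_ _); lia.
Qed.

Lemma taylor1_comp_poly (R : comNzRingType) (g h : {poly R}) (a : R) :
  exists r, g \Po (a%:P + h) = (g.[a])%:P + h * (g^`().[a])%:P + h ^+ 2 * r.
Proof.
elim/poly_ind: g => [|g c [r IH]].
  by exists 0; rewrite comp_poly0 deriv0 !horner0 polyC0 !mulr0 !addr0.
exists (r * (a%:P + h) + (g^`().[a])%:P).
rewrite comp_poly_MXaddC IH derivMXaddC hornerMXaddC hornerD hornerM hornerX.
rewrite !polyCD !polyCM; ring.
Qed.

Lemma scale_mxblock (R : pzRingType) (m1 m2 : nat) (p_ : 'I_m1 -> nat)
    (q_ : 'I_m2 -> nat) (B : forall i j, 'M[R]_(p_ i, q_ j)) (c : R) :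
  c *: mxblock B = mxblock (fun i j => c *: B i j).
Proof. by apply/matrixP => s t; rewrite !mxE. Qed.

Lemma mxblock_diag (R : pzRingType) (m : nat) (p_ : 'I_m -> nat)
    (B : forall i j, 'M[R]_(p_ i, p_ j)) (D : forall i, 'M[R]_(p_ i)) :
    (forall i, B i i = D i) -> (forall i j, i != j -> B i j = 0) ->
  mxblock B = mxdiag D.
Proof.
move=> BD B0; apply: eq_mxblock => i j.
by case: (eqVneq i j) => [<-|/B0 //]; rewrite conform_mx_id BD.
Qed.

Lemma mxdiag_comm_submxblock (R : pzRingType) (m1 m2 : nat)
    (p_ : 'I_m1 -> nat) (q_ : 'I_m2 -> nat) (B : 'M[R]_(\sum_i p_ i, \sum_j q_ j))
    (D1 : forall i, 'M[R]_(p_ i)) (D2 : forall j, 'M[R]_(q_ j)) :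
    B *m mxdiag D2 = mxdiag D1 *m B ->
  forall i j, submxblock B i j *m D2 j = D1 i *m submxblock B i j.
Proof.
rewrite -{1 2}[B]submxblockK mul_mxblock_mxdiag mul_mxdiag_mxblock.
by move=> /eq_mxblockP.
Qed.

Lemma deriv_separable_root (F : fieldType) (q : {poly F}) (x : F) :
  separable_poly q -> root q x -> q^`().[x] != 0.
Proof. by rewrite unlock => /coprimep_root; apply. Qed.

Section HenselLift.
Variables (k : fieldType) (K : fieldExtType k) (alpha : K) (p : {poly k}).
Local Notation mp q := (map_poly (in_alg K) q).
Hypotheses (proot : root (mp p) alpha) (dp0 : (mp p)^`().[alpha] != 0).
Hypothesis Kgen : <<1%VS; alpha>>%VS = fullv.

(* Newton iteration: [q] is improved to [q - (w \Po q) (p \Po q)], where [w]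
   expresses [1 / p'(alpha)] as a polynomial in [alpha]. *)
Lemma hensel_lift m :
  exists q : {poly k}, 'X^m %| mp q \Po ('X + alpha%:P) - alpha%:P.
Proof.
set pi := (mp p)^`().[alpha].
have /Fadjoin1_polyP [w Hw] : pi^-1 \in <<1%VS; alpha>>%VS by rewrite Kgen memvf.
suff [q Hq] : exists q : {poly k}, 'X^(m.+1) %| mp q \Po ('X + alpha%:P) - alpha%:P.
  by exists q; apply: dvdp_trans Hq; apply: dvdp_exp2l.
elim: m => [|m [q Hq]].
  by exists 'X; rewrite map_polyX comp_polyX addrK expr1 dvdpp.
set del := mp q \Po ('X + alpha%:P) - alpha%:P in Hq.
have qE : mp q \Po ('X + alpha%:P) = alpha%:P + del.
  by rewrite /del [RHS]addrC subrK.
exists (q - (w \Po q) * (p \Po q)).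
rewrite rmorphB rmorphM /= !map_comp_poly comp_polyB comp_polyM -!comp_polyA qE.
have [r1 ->] := taylor1_comp_poly (mp p) del alpha.
have [r2 ->] := taylor1_comp_poly (mp w) del alpha.
rewrite (rootP proot) -/pi -Hw; set dw := (mp w)^`().[alpha].
have -> : alpha%:P + del - ((pi^-1)%:P + del * dw%:P + del ^+ 2 * r2) *
      (0%:P + del * pi%:P + del ^+ 2 * r1) - alpha%:P =
    del * (1 - (pi^-1)%:P * pi%:P) -
    del ^+ 2 * ((pi^-1)%:P * r1 + (dw%:P + del * r2) * (pi%:P + del * r1)).
  by rewrite polyC0; ring.
rewrite -polyCM mulVf // subrr mulr0 add0r dvdpNr.
have [t ->] := dvdpP _ _ Hq.
by rewrite dvdp_mulr // exprMn dvdp_mull // -exprM dvdp_exp2l //; lia.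
Qed.

End HenselLift.

Section PowerBasis.
Variables (k : fieldType) (K : fieldExtType k) (alpha : K) (p : {poly k}).
Local Notation mp q := (map_poly (in_alg K) q).
Hypotheses (pirr : irreducible_poly p) (proot : root (mp p) alpha).
Hypothesis Kgen : <<1%VS; alpha>>%VS = fullv.

Local Notation d := (size p).-1.

Lemma degp_gt0 : (0 < d)%N.
Proof. by case: pirr => /= p_gt1 _; rewrite -subn1 subn_gt0. Qed.

Lemma small_root_eq0 (q : {poly k}) :
  root (mp q) alpha -> (size q < size p)%N -> q = 0.
Proof.
move=> rq sq; apply/eqP/negPn/negP => q0.
have rg : root (mp (gcdp p q)) alpha by rewrite gcdp_map root_gcd proot.
have sg : size (gcdp p q) != 1%N.
  apply/negP => /size_poly1P [c c0 gc]; move: rg; rewrite gc map_polyC /= rootC.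
  by rewrite scaler_eq0 oner_eq0 orbF (negPf c0).
have : p %| q by rewrite -(eqp_dvdl _ (pirr.2 _ sg (dvdp_gcdl p q))) dvdp_gcdr.
by move/(dvdp_leq q0); rewrite leqNgt sq.
Qed.

Definition pow_basis : d.-tuple K := [tuple alpha ^+ i | i < d].

Lemma pow_basis_nth (i : 'I_d) : pow_basis`_i = alpha ^+ i.
Proof. by rewrite -tnth_nth tnth_mktuple. Qed.

Lemma pow_basis_free : free pow_basis.
Proof.
apply/freeP => c csum0 i; pose q := \sum_(j < d) c j *: 'X^j.
have qroot : root (mp q) alpha.
  apply/rootP; rewrite -csum0 rmorph_sum horner_sum; apply: eq_bigr => j _.
  rewrite pow_basis_nth -mul_polyC rmorphM /= map_polyC map_polyXn.
  by rewrite hornerCM hornerXn mulr_algl.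
have size_q : (size q < size p)%N.
  apply: leq_ltn_trans (_ : d < size p)%N; last by have := degp_gt0; lia.
  apply/leq_sizeP => j dj; rewrite coef_sumMXn big_pred0 // => i0.
  by apply: contra_leqF dj => /eqP <-.
have /(congr1 (coefp i)) := small_root_eq0 qroot size_q.
by rewrite /= coef0 coef_sumMXn (eq_bigl (pred1 i)) ?big_pred1_eq.
Qed.

Lemma memv_pow_basis v : v \in <<pow_basis>>%VS.
Proof.
have /Fadjoin1_polyP [r ->] : v \in <<1%VS; alpha>>%VS by rewrite Kgen memvf.
rewrite (divp_eq r p) rmorphD rmorphM hornerD hornerM /= (rootP proot) mulr0 add0r.
rewrite horner_coef rpred_sum // => i _; rewrite coef_map /= mulr_algl memvZ //.
have i_lt_d : (i < d)%N.
  have ir : (i < size (r %% p)%R)%N by rewrite -(size_map_poly (in_alg K)).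
  have := ltn_modp r p; rewrite irredp_neq0 // => sp.
  by rewrite -ltnS (ltn_predK sp) (leq_ltn_trans ir sp).
by rewrite -(pow_basis_nth (Ordinal i_lt_d)) memv_span // mem_nth // size_tuple.
Qed.

Lemma pow_basis_coord v : v = \sum_i coord pow_basis i v *: pow_basis`_i.
Proof. exact/coord_span/memv_pow_basis. Qed.

Definition lmulmx (u : K) : 'M[k]_d :=
  \matrix_(b, e) coord pow_basis b (u * pow_basis`_e).

Fact lmulmx_is_linear : linear lmulmx.
Proof.
by move=> c u v; apply/matrixP => b e; rewrite !mxE mulrDl -scalerAl linearP.
Qed.

HB.instance Definition _ :=
  GRing.isLinear.Build k K 'M[k]_d _ lmulmx lmulmx_is_linear.

Lemma lmulmx1 : lmulmx 1 = 1%:M.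
Proof.
by apply/matrixP => b e; rewrite !mxE mul1r coord_free ?pow_basis_free // eq_sym.
Qed.

Lemma lmulmxM u v : lmulmx (u * v) = lmulmx u *m lmulmx v.
Proof.
apply/matrixP => b e; rewrite !mxE -mulrA {1}(pow_basis_coord (v * _)).
rewrite mulr_sumr linear_sum; apply: eq_bigr => c _.
by rewrite !mxE -scalerAr linearZ /= mulrC.
Qed.

Let idx0 := Ordinal degp_gt0.

Lemma lmulmx_eq0 u : (lmulmx u == 0) = (u == 0).
Proof.
apply/eqP/eqP => [/matrixP u0 | ->]; last exact: linear0.
rewrite (pow_basis_coord u) big1 // => b _.
by have := u0 b idx0; rewrite !mxE pow_basis_nth expr0 mulr1 => ->; rewrite scale0r.
Qed.

Lemma compmx_lmulmx : p \is monic -> compmx p = lmulmx alpha.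
Proof.
move=> pmonic.
have alpha_d : alpha ^+ d = - \sum_(i < d) p`_i *: alpha ^+ i.
  have := rootP proot; rewrite horner_coef size_map_poly.
  rewrite -(prednK (_ : 0 < size p)%N) ?size_poly_gt0 ?irredp_neq0 //.
  rewrite big_ord_recr /= coef_map /= -lead_coefE (monicP pmonic) scale1r mul1r.
  move=> /eqP; rewrite addrC addr_eq0 => /eqP ->; congr (- _).
  by apply: eq_bigr => i _; rewrite coef_map /= mulr_algl.
apply/matrixP => b e; rewrite !mxE pow_basis_nth -exprS.
have [e_last | e_not_last] := eqP.
  have -> : e.+1 = d by rewrite e_last prednK ?degp_gt0.
  rewrite alpha_d -sumrN (eq_bigr (fun i : 'I_d => (- p`_i) *: pow_basis`_i)).
    by rewrite coord_sum_free ?pow_basis_free.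
  by move=> i _; rewrite scaleNr pow_basis_nth.
have e1_lt_d : (e.+1 < d)%N.
  have : (e : nat) != d.-1 by apply/eqP.
  by have := ltn_ord e; lia.
by rewrite -(pow_basis_nth (Ordinal e1_lt_d)) coord_free ?pow_basis_free.
Qed.

(* [Z] applied to [1]; it inverts [lmulmx] on its image. *)
Definition elt_of_mx (Z : 'M[k]_d) : K := \sum_b Z b idx0 *: pow_basis`_b.

Lemma centralizer_lmulmx (Z : 'M[k]_d) :
  (forall u, Z *m lmulmx u = lmulmx u *m Z) -> Z = lmulmx (elt_of_mx Z).
Proof.
move=> Zcomm; apply/matrixP => b e.
have /matrixP /(_ b idx0) := Zcomm (alpha ^+ e); rewrite !mxE.
rewrite (eq_bigr (fun c => if c == e then Z b c else 0)); last first.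
  move=> c _; rewrite mxE pow_basis_nth expr0 mulr1 -(pow_basis_nth e).
  rewrite coord_free ?pow_basis_free // eq_sym.
  by case: eqP; rewrite ?mulr1 ?mulr0.
rewrite -big_mkcond big_pred1_eq => ->.
rewrite mulr_suml linear_sum; apply: eq_bigr => c _.
by rewrite mxE -scalerAl linearZ /= mulrC (pow_basis_nth e) [pow_basis`_c * _]mulrC.
Qed.

Lemma elt_of_mx0 : elt_of_mx 0 = 0.
Proof. by rewrite /elt_of_mx big1 // => b _; rewrite mxE scale0r. Qed.

Local Notation bsz m := (\sum_(i < m) d)%N.

(* The matrix of multiplication by [P] from [K[x]/(x^m2)] to [K[x]/(x^m1)],
   in the bases [alpha^b x^a]: a block lower-triangular Toeplitz matrix. *)
Definition toeplitz_mx m1 m2 (P : {poly K}) : 'M[k]_(bsz m1, bsz m2) :=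
  @mxblock _ m1 m2 (fun _ => d) (fun _ => d)
    (fun a c => if (c <= a)%N then lmulmx P`_(a - c) else 0).

Fact toeplitz_mx_is_zmod_morphism m1 m2 : zmod_morphism (toeplitz_mx m1 m2).
Proof.
move=> P Q; rewrite /toeplitz_mx -mxblockB; apply: eq_mxblock => a c.
by case: ifP; rewrite ?subr0 // coefB linearB.
Qed.

HB.instance Definition _ m1 m2 := GRing.isZmodMorphism.Build _ _
  (toeplitz_mx m1 m2) (toeplitz_mx_is_zmod_morphism m1 m2).

Lemma toeplitz_mxZ m1 m2 (c : k) P :
  toeplitz_mx m1 m2 ((c%:A)%:P * P) = c *: toeplitz_mx m1 m2 P.
Proof.
rewrite /toeplitz_mx scale_mxblock; apply: eq_mxblock => a b.
by case: ifP; rewrite ?scaler0 // coefCM mulr_algl linearZ.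
Qed.

Lemma toeplitz_mxM m1 m2 m3 P Q : 'X^(m1 - m2) %| P ->
  toeplitz_mx m1 m2 P *m toeplitz_mx m2 m3 Q = toeplitz_mx m1 m3 (P * Q).
Proof.
move=> /dvdp_XnP P0; rewrite mul_mxblock; apply: eq_mxblock => a g.
rewrite (eq_bigr (fun c : 'I_m2 => lmulmx (if (g <= c <= a)%N
    then P`_(a - c) * Q`_(c - g) else 0))); last first.
  move=> c _; case: (leqP c a) => ca; case: (leqP g c) => gc;
    by rewrite ?andbT ?andbF ?mulmx0 ?mul0mx ?linear0 ?lmulmxM.
rewrite -linear_sum -big_mkcond; case: (leqP g a) => ga.
  by rewrite (coefM_window _ P0).
by rewrite big_pred0 ?linear0 // => c; apply/negbTE; rewrite negb_and -!ltnNge; lia.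
Qed.

Lemma toeplitz_mx_eq0 m1 m2 P : (0 < m2)%N ->
  toeplitz_mx m1 m2 P = 0 <-> 'X^m1 %| P.
Proof.
move=> m2_gt0; rewrite /toeplitz_mx.
rewrite -(@mxblock0 _ _ _ (fun _ : 'I_m1 => d) (fun _ : 'I_m2 => d)).
split=> [/eq_mxblockP T0 | /dvdp_XnP P0].
  apply/dvdp_XnP => t tm; have /eqP := T0 (Ordinal tm) (Ordinal m2_gt0).
  by rewrite subn0 lmulmx_eq0 => /eqP.
apply: eq_mxblock => a c; case: ifP => // _.
by rewrite P0 ?linear0 // (leq_ltn_trans (leq_subr _ _) (ltn_ord a)).
Qed.

Lemma toeplitz_mxC m (u : K) :
  toeplitz_mx m m u%:P = mxdiag (fun _ : 'I_m => lmulmx u).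
Proof.
apply: mxblock_diag => [a|a c]; first by rewrite leqnn subnn coefC.
move=> ac; case: ifP => // ca; rewrite coefC subn_eq0 leqNgt ltn_neqAle ca andbT.
by move: ac; rewrite -val_eqE eq_sym => /negPf ->; rewrite linear0.
Qed.

Lemma toeplitz_mx1 m : toeplitz_mx m m 1 = 1%:M.
Proof. by rewrite -polyC1 toeplitz_mxC lmulmx1 mxdiagZ. Qed.

Lemma toeplitz_mxX m : toeplitz_mx m m 'X =
  @mxblock _ m m (fun _ => d) (fun _ => d)
    (fun a c => if (a : nat) == c.+1 then 1%:M else 0).
Proof.
apply: eq_mxblock => a c; rewrite coefX.
have [ca | ac] := leqP c a; last by rewrite ltn_eqF // ltnW.
have -> : ((a - c)%N == 1) = (a == c.+1 :> nat) by apply/eqP/eqP; lia.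
by case: eqP; rewrite ?linear0 ?lmulmx1.
Qed.

Lemma toeplitz_mx_jordan m : p \is monic ->
  toeplitz_mx m m ('X + alpha%:P) = jordan_blk m (compmx p).
Proof.
move=> pmonic; rewrite raddfD /= toeplitz_mxX toeplitz_mxC compmx_lmulmx //.
rewrite /mxdiag -mxblockD; apply: eq_mxblock => a c; have [<- | _] := eqVneq a c; last by rewrite addr0.
by rewrite (ltn_eqF (ltnSn a)) add0r conform_mx_id.
Qed.

Definition nblk m1 m2 (Y : 'M[k]_(bsz m1, bsz m2)) (a c : nat) : 'M[k]_d :=
  match (insub a : option 'I_m1), (insub c : option 'I_m2) with
  | Some a', Some c' => @submxblock _ m1 m2 (fun _ => d) (fun _ => d) Y a' c'
  | _, _ => 0
  end.

Lemma nblkE m1 m2 Y (a : 'I_m1) (c : 'I_m2) :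
  @nblk m1 m2 Y a c = @submxblock _ m1 m2 (fun _ => d) (fun _ => d) Y a c.
Proof. by rewrite /nblk !valK. Qed.

Lemma nblk_col_out m1 m2 Y a c : (m2 <= c)%N -> @nblk m1 m2 Y a c = 0.
Proof.
by move=> m2c; rewrite /nblk; case: (insub a) => // a'; rewrite insubN // -leqNgt.
Qed.

Lemma nblk_shift m1 m2 (Y : 'M[k]_(bsz m1, bsz m2)) :
    Y *m toeplitz_mx m2 m2 'X = toeplitz_mx m1 m1 'X *m Y ->
  forall a g, (a < m1)%N -> (g < m2)%N ->
  nblk Y a g.+1 = if (0 < a)%N then nblk Y a.-1 g else 0.
Proof.
rewrite !toeplitz_mxX -{1 2}[Y]submxblockK !mul_mxblock => /eq_mxblockP YX.
move=> a g am gm; have := YX (Ordinal am) (Ordinal gm).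
rewrite (eq_bigr (fun c : 'I_m2 =>
    if (c : nat) == g.+1 then nblk Y a c else 0)); last first.
  by move=> c _; rewrite -(nblkE Y (Ordinal am)); case: eqP; rewrite ?mulmx1 ?mulmx0.
rewrite (eq_bigr (fun c : 'I_m1 =>
    if (0 < a)%N && ((c : nat) == a.-1) then nblk Y c g else 0)); last first.
  move=> c _; rewrite -(nblkE Y c (Ordinal gm)) /=.
  have -> : (a == c.+1 :> nat) = (0 < a)%N && (c == a.-1 :> nat).
    by apply/eqP/andP => [-> | [a_gt0 /eqP ->]]; [split | rewrite prednK].
  by case: ifP; rewrite ?mul1mx ?mul0mx.
rewrite -!big_mkcond big_ord1_eq; case: (posnP a) => [-> | a_gt0].
  by rewrite big_pred0 //; case: ltnP => [_ -> | m2g _] //; rewrite nblk_col_out.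
rewrite (eq_bigl (fun c : 'I_m1 => (c : nat) == a.-1)) //.
rewrite (big_ord1_eq _ (fun j => nblk Y j g)) (leq_ltn_trans (leq_pred a) am).
by case: ltnP => [_ -> | m2g <-] //; rewrite nblk_col_out.
Qed.

Lemma nblk_toeplitz m1 m2 (Y : 'M[k]_(bsz m1, bsz m2)) :
    Y *m toeplitz_mx m2 m2 'X = toeplitz_mx m1 m1 'X *m Y ->
  forall c a, (c <= m2)%N -> (a < m1)%N ->
  nblk Y a c = if (c <= a)%N then nblk Y (a - c) 0 else 0.
Proof.
move=> YX; elim=> [|c IHc] a cm am; first by rewrite subn0.
rewrite nblk_shift //; case: (posnP a) => [-> // | a_gt0].
rewrite IHc; try lia.
have -> : (c <= a.-1)%N = (c.+1 <= a)%N by lia.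
by have -> : (a.-1 - c = a - c.+1)%N by lia.
Qed.

Definition poly_of_mx m1 m2 (Y : 'M[k]_(bsz m1, bsz m2)) : {poly K} :=
  \poly_(t < m1) elt_of_mx (nblk Y t 0).

Lemma toeplitz_mx_intertwiner m1 m2 (Y : 'M[k]_(bsz m1, bsz m2)) : (0 < m2)%N ->
    (forall u, Y *m toeplitz_mx m2 m2 u%:P = toeplitz_mx m1 m1 u%:P *m Y) ->
    Y *m toeplitz_mx m2 m2 'X = toeplitz_mx m1 m1 'X *m Y ->
  Y = toeplitz_mx m1 m2 (poly_of_mx Y) /\ 'X^(m1 - m2) %| poly_of_mx Y.
Proof.
move=> m2_gt0 YK YX.
have Yblk t : (t < m1)%N -> nblk Y t 0 = lmulmx (elt_of_mx (nblk Y t 0)).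
  move=> tm; rewrite (nblkE Y (Ordinal tm) (Ordinal m2_gt0)).
  apply: centralizer_lmulmx => u.
  by have := YK u; rewrite !toeplitz_mxC => /mxdiag_comm_submxblock; apply.
split.
  rewrite -[LHS]submxblockK; apply: eq_mxblock => a c.
  rewrite -nblkE (nblk_toeplitz YX (ltnW (ltn_ord c)) (ltn_ord a)) coef_poly.
  case: ifP => // _; have ac_lt : (a - c < m1)%N by have := ltn_ord a; lia.
  by rewrite ac_lt -(Yblk _ ac_lt).
apply/dvdp_XnP => t tm; rewrite coef_poly; case: ifP => // _.
have tm2 : (t + m2 < m1)%N by lia.
have := nblk_toeplitz YX (leqnn m2) tm2.
by rewrite nblk_col_out // leq_addl addnK => <-; rewrite elt_of_mx0.
Qed.

Section KxlRepresentation.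
Variable lam : seq nat.
Hypotheses (pmonic : p \is monic) (lam_gt0 : all (fun x => 0 < x)%N lam).
Local Notation s := (size lam).
Local Notation l i := (nth 0%N lam i).

Lemma nth_lam_gt0 (i : 'I_s) : (0 < l i)%N.
Proof. exact/(allP lam_gt0)/mem_nth. Qed.

Definition Kxl_repr (M : 'M[{poly K}]_s) : 'M[k]_(jsize lam d) :=
  @mxblock _ s s (fun i => bsz (l i)) (fun i => bsz (l i))
    (fun i j => toeplitz_mx (l i) (l j) (M i j)).

Fact Kxl_repr_is_zmod_morphism : zmod_morphism Kxl_repr.
Proof.
move=> M M'; rewrite /Kxl_repr -mxblockB.
by apply: eq_mxblock => i j; rewrite !mxE raddfB.
Qed.

HB.instance Definition _ :=
  GRing.isZmodMorphism.Build _ _ Kxl_repr Kxl_repr_is_zmod_morphism.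

Lemma Kxl_reprZ (c : k) M : Kxl_repr ((c%:A)%:P *: M) = c *: Kxl_repr M.
Proof.
rewrite /Kxl_repr scale_mxblock.
by apply: eq_mxblock => i j; rewrite mxE toeplitz_mxZ.
Qed.

Lemma Kxl_reprM M M' :
  in_Kxl_alg lam M -> Kxl_repr (M *m M') = Kxl_repr M *m Kxl_repr M'.
Proof.
move=> M_alg; rewrite /Kxl_repr mul_mxblock; apply: eq_mxblock => i i'.
by rewrite mxE raddf_sum; apply: eq_bigr => j _; rewrite toeplitz_mxM.
Qed.

Lemma Kxl_repr_eq0 M : Kxl_repr M = 0 <-> in_Kxl_ideal lam M.
Proof.
rewrite /Kxl_repr -(@mxblock0 _ _ _ (fun i : 'I_s => bsz (l i)) (fun i => bsz (l i))).
split=> [/eq_mxblockP M0 i j | M_ideal].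
  by apply/(toeplitz_mx_eq0 _ _ (nth_lam_gt0 j)); rewrite M0.
by apply: eq_mxblock => i j; apply/(toeplitz_mx_eq0 _ _ (nth_lam_gt0 j)).
Qed.

Lemma scalar_in_Kxl_alg (P : {poly K}) : in_Kxl_alg lam P%:M.
Proof.
move=> i j; rewrite mxE; case: eqP => [->|_]; last by rewrite mulr0n dvdp0.
by rewrite subnn expr0 mulr1n dvd1p.
Qed.

Lemma Kxl_repr_scalar (P : {poly K}) :
  Kxl_repr P%:M = mxdiag (fun i => toeplitz_mx (l i) (l i) P).
Proof.
apply: mxblock_diag => [i|i j /negPf ij]; first by rewrite mxE eqxx mulr1n.
by rewrite mxE ij mulr0n raddf0.
Qed.

Lemma Kxl_repr1 : Kxl_repr 1%:M = 1%:M.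
Proof.
by rewrite Kxl_repr_scalar -(mxdiagZ 1); apply: eq_mxdiag => i; rewrite toeplitz_mx1.
Qed.

Lemma Kxl_repr_jordan : Kxl_repr ('X + alpha%:P)%:M = jordan lam (compmx p).
Proof.
by rewrite Kxl_repr_scalar; apply: eq_mxdiag => i; rewrite toeplitz_mx_jordan.
Qed.

Lemma Kxl_repr_scalarM (P Q : {poly K}) :
  Kxl_repr (P * Q)%:M = Kxl_repr P%:M *m Kxl_repr Q%:M.
Proof. by rewrite scalar_mxM Kxl_reprM //; apply: scalar_in_Kxl_alg. Qed.

Lemma Kxl_repr_in_centralizer M : in_Kxl_alg lam M ->
  in_centralizer (jordan lam (compmx p)) (Kxl_repr M).
Proof.
move=> M_alg; rewrite /in_centralizer -Kxl_repr_jordan.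
by rewrite -!Kxl_reprM ?mul_mx_scalar ?mul_scalar_mx //; apply: scalar_in_Kxl_alg.
Qed.

Lemma Kxl_repr_scalarC (c : k) : Kxl_repr ((c%:A)%:P)%:M = c%:M.
Proof. by rewrite -scalemx1 Kxl_reprZ Kxl_repr1 scalemx1. Qed.

Lemma comm_Kxl_repr_comp (B : 'M[k]_(jsize lam d)) (z : {poly K}) :
    B *m Kxl_repr z%:M = Kxl_repr z%:M *m B ->
  forall r : {poly k},
  B *m Kxl_repr (mp r \Po z)%:M = Kxl_repr (mp r \Po z)%:M *m B.
Proof.
move=> Bz; elim/poly_ind => [|r c IHr].
  by rewrite rmorph0 comp_poly0 raddf0 raddf0 mulmx0 mul0mx.
rewrite rmorphD rmorphM /= map_polyX map_polyC /= comp_poly_MXaddC.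
rewrite !raddfD /= Kxl_repr_scalarM Kxl_repr_scalarC mulmxDl mulmxA IHr.
by rewrite -!mulmxA Bz mul_mx_scalar mul_scalar_mx.
Qed.

Lemma centralizer_jordan_comm (B : 'M[k]_(jsize lam d)) : separable_poly p ->
    in_centralizer (jordan lam (compmx p)) B ->
  (forall u, B *m Kxl_repr (u%:P)%:M = Kxl_repr (u%:P)%:M *m B) /\
  B *m Kxl_repr 'X%:M = Kxl_repr 'X%:M *m B.
Proof.
rewrite /in_centralizer -Kxl_repr_jordan => psep BJ.
have dp0 : (mp p)^`().[alpha] != 0 by rewrite deriv_separable_root ?separable_map.
have [q qalpha] := hensel_lift proot dp0 Kgen (\max_(i < s) l i).
have Balpha : B *m Kxl_repr (alpha%:P)%:M = Kxl_repr (alpha%:P)%:M *m B.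
  suff <- : Kxl_repr (mp q \Po ('X + alpha%:P))%:M = Kxl_repr (alpha%:P)%:M.
    exact: comm_Kxl_repr_comp.
  apply/eqP; rewrite -subr_eq0 -!raddfB; apply/eqP/Kxl_repr_eq0 => i j.
  rewrite mxE; case: eqP => _; last by rewrite mulr0n dvdp0.
  by rewrite mulr1n (dvdp_trans _ qalpha) // dvdp_exp2l // (leq_bigmax i).
have BK u : B *m Kxl_repr (u%:P)%:M = Kxl_repr (u%:P)%:M *m B.
  have /Fadjoin1_polyP [r ->] : u \in <<1%VS; alpha>>%VS by rewrite Kgen memvf.
  by rewrite -comp_polyCr; apply: comm_Kxl_repr_comp.
split=> //; rewrite -(addrK (alpha%:P) 'X) !raddfB /=.
by rewrite mulmxBl BJ Balpha.
Qed.

Lemma Kxl_repr_onto (B : 'M[k]_(jsize lam d)) :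
    (forall u, B *m Kxl_repr (u%:P)%:M = Kxl_repr (u%:P)%:M *m B) ->
    B *m Kxl_repr 'X%:M = Kxl_repr 'X%:M *m B ->
  exists2 M, in_Kxl_alg lam M & Kxl_repr M = B.
Proof.
move=> BK BX.
pose Y := @submxblock _ s s (fun i => bsz (l i)) (fun i => bsz (l i)) B.
have YK i j u :
    Y i j *m toeplitz_mx (l j) (l j) u%:P = toeplitz_mx (l i) (l i) u%:P *m Y i j.
  by move: (BK u); rewrite !Kxl_repr_scalar => /mxdiag_comm_submxblock; apply.
have YX i j :
    Y i j *m toeplitz_mx (l j) (l j) 'X = toeplitz_mx (l i) (l i) 'X *m Y i j.
  by move: BX; rewrite !Kxl_repr_scalar => /mxdiag_comm_submxblock; apply.
have YT i j := toeplitz_mx_intertwiner (nth_lam_gt0 j) (YK i j) (YX i j).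
exists (\matrix_(i, j) poly_of_mx (Y i j)) => [i j | ].
  by rewrite mxE; apply: (YT i j).2.
by rewrite -[RHS]submxblockK; apply: eq_mxblock => i j; rewrite mxE -(YT i j).1.
Qed.

End KxlRepresentation.

End PowerBasis.

Theorem mainTheorem4 (k : fieldType) (p : {poly k})
    (K : fieldExtType k) (alpha : K) (n : nat) (lam : seq nat) :
  p \is monic -> irreducible_poly p -> separable_poly p ->
  root (map_poly (in_alg K) p) alpha ->
  <<1%VS; alpha>>%VS = fullv ->
  is_partition n lam ->
  centralizer_iso_Kxl (K := K) lam (jordan lam (compmx p)).
Proof.
move=> pmonic pirr psep proot Kgen [_ lam_gt0 _].
exists (Kxl_repr alpha p (lam := lam)); split.
- exact: Kxl_repr_in_centralizer.
- exact: Kxl_repr1.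
- split; [|split].
  + by move=> M M' _ _; apply: raddfD.
  + by move=> M M' M_alg _; apply: Kxl_reprM.
  + by move=> c M _; apply: Kxl_reprZ.
- move=> B BJ.
  have [BK BX] := centralizer_jordan_comm pirr proot Kgen pmonic lam_gt0 psep BJ.
  exact: Kxl_repr_onto.
- by move=> M _; apply: Kxl_repr_eq0.
Qed.
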